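(* Let $T$ be a rooted binary ultrametric caterpillar tree on $X$ with $|X|=n\geq 3$ and strictly positive edge lengths, let $X'\subset X$, and let $\widetilde T=T_{\widetilde X}$ with $\widetilde X=X\setminus X'$. Then for all $x_i,x_j\in\widetilde X$, $FP_T(x_i)\geq FP_T(x_j)$ implies $FP_{\widetilde T}(x_i)\geq FP_{\widetilde T}(x_j)$.
   Context: A rooted binary phylogenetic $X$-tree ($X$ finite) is a rooted tree whose root $\rho$ has in-degree 0 and out-degree 2, all edges directed away from $\rho$, all other interior vertices have in-degree 1 and out-degree 2, and whose leaves are bijectively labelled by $X$. Every edge $e$ has a strictly positive length $\lambda_e$. The tree is ultrametric if the sum of edge lengths on the path from the root to every leaf is the same. A cherry is a pair of leaves with the same parent; a caterpillar tree has exactly one cherry. The Fair Proportion index of $x\in X$ is $FP_T(x)=\sum_{e\in P(T;\rho,x)}\lambda_e/D_e$, where $P(T;\rho,x)$ is the path from $\rho$ to $x$ and $D_e$ is the number of leaves descended from $e$. For $Y\subseteq X$, the induced subtree $T_Y$ is obtained from the minimal subtree of $T$ connecting $Y$ by suppressing all non-root vertices of in- and out-degree 1, adding the lengths of merged edges; if the root then has out-degree 1, it and its incident edge are deleted. *)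

From mathcomp Require Import all_boot all_order all_algebra.
Set Implicit Arguments. Unset Strict Implicit. Unset Printing Implicit Defensive.
Import Order.TTheory GRing.Theory Num.Theory.
Local Open Scope ring_scope.

(* A rooted binary tree with leaves labelled in X and edge lengths in R.
   [Nd a l b r] is an interior vertex with two outgoing edges: one of length
   [a] to the subtree [l] and one of length [b] to the subtree [r]. *)
Inductive btree (R X : Type) :=
| Lf of X
| Nd of R & btree R X & R & btree R X.
Arguments Lf {R X}.
Arguments Nd {R X}.

Section Trees.
Variables (R : realFieldType) (X : finType).
Implicit Types (t l r : btree R X) (x : X).

Fixpoint leaves t : seq X :=
  match t with Lf y => [:: y] | Nd _ l _ r => leaves l ++ leaves r end.

Definition phylo_X_tree t : Prop := perm_eq (leaves t) (enum X).

Fixpoint pos_lengths t : bool :=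
  match t with
  | Lf _ => true
  | Nd a l b r => [&& 0 < a, 0 < b, pos_lengths l & pos_lengths r]
  end.

Fixpoint root_dist t x : R :=
  match t with
  | Lf _ => 0
  | Nd a l b r =>
      if x \in leaves l then a + root_dist l x
      else if x \in leaves r then b + root_dist r x else 0
  end.

Definition ultrametric t : Prop :=
  exists c : R, forall x, x \in leaves t -> root_dist t x = c.

Fixpoint cherries t : nat :=
  match t with
  | Lf _ => 0
  | Nd _ (Lf _) _ (Lf _) => 1
  | Nd _ l _ r => cherries l + cherries r
  end.

Definition caterpillar t : Prop := cherries t = 1%N.

(* Fair Proportion index: sum over edges e on the root-to-x path of
   lambda_e / D_e, D_e = number of leaves below e. *)
Fixpoint FP t x : R :=
  match t with
  | Lf _ => 0
  | Nd a l b r =>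
      if x \in leaves l then a / (size (leaves l))%:R + FP l x
      else if x \in leaves r then b / (size (leaves r))%:R + FP r x else 0
  end.

(* Restriction to Y: returns None if no leaf of Y is below, otherwise
   Some (e, t') where t' is the suppressed restricted subtree and e is the
   length of the path segment that got merged (through suppressed
   vertices of in/out-degree 1) and must be added to the parent edge. *)
Fixpoint restrict (Y : {set X}) t : option (R * btree R X) :=
  match t with
  | Lf y => if y \in Y then Some (0, Lf y) else None
  | Nd a l b r =>
      match restrict Y l, restrict Y r with
      | Some (el, l'), Some (er, r') => Some (0, Nd (a + el) l' (b + er) r')
      | Some (el, l'), None => Some (a + el, l')
      | None, Some (er, r') => Some (b + er, r')
      | None, None => None
      end
  end.

(* Induced subtree T_Y: the root, if it ends up with out-degree 1, is
   deleted together with its incident (merged) edge, i.e. the pending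
   length is discarded. None iff Y contains no leaf of t. *)
Definition induced (Y : {set X}) t : option (btree R X) :=
  omap snd (restrict Y t).

End Trees.

From mathcomp Require Import all_boot all_order all_algebra.
Import Order.TTheory GRing.Theory Num.Theory.
Local Open Scope ring_scope.

(* A tree with at most one cherry is a single leaf, a cherry,
   or a "pendant node": a root whose children are a leaf z (edge p) and a
   subtree s with at least two leaves (edge d).  If such a node is ultrametric
   then p is its height, FP z = p, and every leaf x of s has
   FP x = d / |s| + FP_s x < d + root_dist_s x = p, because FP never exceeds
   the root distance and the edge d is shared by at least two leaves; so z has
   the strictly largest FP value, and on s the FP order is that of the subtree.
   Restriction to a set Y of leaves preserves positivity of lengths, root
   distances and hence ultrametricity, and maps a pendant node to a pendant
   node (with a merged edge above the restricted subtree), to the restricted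
   subtree alone, or to the single leaf z.  In the first case z still has the
   largest (now possibly tied) FP value; in all cases the order on s survives
   by induction. *)

Set Implicit Arguments. Unset Strict Implicit.

Section FairProportionCaterpillar.
Variables (R : realFieldType) (X : finType).
Implicit Types (t s l r : btree R X) (x z : X) (Y : {set X}).

Lemma ler_pdivn (u : R) n : 0 <= u -> (0 < n)%N -> u / n%:R <= u.
Proof.
by move=> u0 n0; rewrite ler_pdivrMr ?ltr0n // ler_peMr // ler1n.
Qed.

Lemma ltr_pdivn (u : R) n : 0 < u -> (1 < n)%N -> u / n%:R < u.
Proof.
move=> u0 n1; rewrite ltr_pdivrMr ?ltr0n ?(ltn_trans _ n1) //.
by rewrite ltr_pMr // ltr1n.
Qed.

Lemma size_leaves_gt0 t : (0 < size (leaves t))%N.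
Proof. by elim: t => //= a l IHl b r IHr; rewrite size_cat addn_gt0 IHl. Qed.

Lemma size_leaves_Nd a l b r : (1 < size (leaves (Nd a l b r)))%N.
Proof. by rewrite /= size_cat (leq_add (size_leaves_gt0 l) (size_leaves_gt0 r)). Qed.

Lemma cherries_Nd_gt0 a l b r : (0 < cherries (Nd a l b r))%N.
Proof.
suff: forall t, if t is Lf _ then true else (0 < cherries t)%N.
  by move=> /(_ (Nd a l b r)).
elim=> // a' l' IHl b' r' IHr.
by case: l' IHl => [z|? ? ? ?] IHl; case: r' IHr => [w|? ? ? ?] IHr;
  rewrite //= addn_gt0 ?IHl ?IHr ?orbT.
Qed.

Lemma FP_le_root_dist t x : pos_lengths t -> FP t x <= root_dist t x.
Proof.
elim: t => [y|a l IHl b r IHr] //= /and4P[a0 b0 pl pr].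
have share (u : R) t' : 0 < u -> u / (size (leaves t'))%:R <= u.
  by move=> u0; rewrite ler_pdivn ?ltW ?size_leaves_gt0.
case: ifP => _; first by rewrite lerD ?share ?IHl.
by case: ifP => _ //; rewrite lerD ?share ?IHr.
Qed.

Lemma edge_FP_le_root_dist t (u : R) x : pos_lengths t -> 0 <= u ->
  u / (size (leaves t))%:R + FP t x <= u + root_dist t x.
Proof.
move=> pt u0; apply: lerD; last exact: FP_le_root_dist.
by rewrite ler_pdivn ?size_leaves_gt0.
Qed.

Lemma edge_FP_lt_root_dist t (u : R) x : pos_lengths t -> 0 < u ->
  (1 < size (leaves t))%N ->
  u / (size (leaves t))%:R + FP t x < u + root_dist t x.
Proof.
move=> pt u0 t2; apply: ltr_leD; first exact: ltr_pdivn.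
exact: FP_le_root_dist.
Qed.

Lemma restrict_leaves Y t :
  match restrict Y t with
  | None => forall x, x \in Y -> x \notin leaves t
  | Some (e, t') => forall x, (x \in leaves t') = (x \in Y) && (x \in leaves t)
  end.
Proof.
elim: t => [y|a l IHl b r IHr] /=.
  case: ifP => yY x; rewrite inE; first by case: eqP => [->|]; rewrite ?yY ?andbF.
  by apply: contraTneq => ->; rewrite yY.
move: IHl IHr.
case: (restrict Y l) => [[el l']|]; case: (restrict Y r) => [[er r']|] //= Hl Hr x;
  rewrite ?mem_cat ?Hl ?Hr.
- by rewrite andb_orr.
- by case xY: (x \in Y) => //=; rewrite (negbTE (Hr x xY)) orbF.
- by case xY: (x \in Y) => //=; rewrite (negbTE (Hl x xY)).
- by move=> xY; rewrite (negbTE (Hl x xY)) (negbTE (Hr x xY)).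
Qed.

Lemma restrict_pos Y t e t' :
  pos_lengths t -> restrict Y t = Some (e, t') -> 0 <= e /\ pos_lengths t'.
Proof.
elim: t e t' => [y|a l IHl b r IHr] e t' /=; first by case: ifP => // _ _ [<- <-].
case/and4P=> a0 b0 pl pr.
case El: (restrict Y l) => [[el l']|]; case Er: (restrict Y r) => [[er r']|] // [<- <-].
- have [el0 pl'] := IHl _ _ pl El; have [er0 pr'] := IHr _ _ pr Er.
  by split; rewrite //= pl' pr' !ltr_wpDr.
- by have [el0 pl'] := IHl _ _ pl El; split=> //; exact: addr_ge0 (ltW a0) el0.
- by have [er0 pr'] := IHr _ _ pr Er; split=> //; exact: addr_ge0 (ltW b0) er0.
Qed.

Lemma restrict_root_dist Y t e t' x :
  restrict Y t = Some (e, t') -> x \in Y -> x \in leaves t ->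
  e + root_dist t' x = root_dist t x.
Proof.
elim: t e t' => [y|a l IHl b r IHr] e t' /=.
  by case: ifP => // _ [<- <-] _ _; rewrite addr0.
move=> + xY; have := restrict_leaves Y l; have := restrict_leaves Y r.
case El: (restrict Y l) => [[el l']|]; case Er: (restrict Y r) => [[er r']|] //= Hr Hl [<- <-].
- rewrite add0r /= Hl Hr xY /= mem_cat.
  case: ifP => xl /=; first by rewrite -(IHl _ _ El xY xl) addrA.
  by move=> xr; rewrite xr -(IHr _ _ Er xY xr) addrA.
- rewrite mem_cat (negbTE (Hr x xY)) orbF => xl.
  by rewrite xl -(IHl _ _ El xY xl) addrA.
- rewrite mem_cat (negbTE (Hl x xY)) /= => xr.
  by rewrite xr -(IHr _ _ Er xY xr) addrA.
Qed.

Lemma restrict_ultrametric Y t e t' :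
  ultrametric t -> restrict Y t = Some (e, t') -> ultrametric t'.
Proof.
move=> [c height] Et; have := restrict_leaves Y t; rewrite Et => leaves_t'.
exists (c - e) => x; rewrite leaves_t' => /andP[xY xt].
by rewrite -(height x xt) -(restrict_root_dist Et xY xt) addrC addKr.
Qed.

Definition pendant_node t z p d s := t = Nd p (Lf z) d s \/ t = Nd d s p (Lf z).

Section PendantNode.
Variables (t s : btree R X) (z : X) (p d : R).
Hypotheses (tP : pendant_node t z p d s) (zNs : z \notin leaves s).

Lemma leaves_pendant x : (x \in leaves t) = (x == z) || (x \in leaves s).
Proof. by case: tP => ->; rewrite /= ?mem_cat inE // orbC. Qed.

Lemma pos_lengths_pendant : pos_lengths t = [&& 0 < p, 0 < d & pos_lengths s].
Proof. by case: tP => ->; rewrite //= andbT andbCA. Qed.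

Lemma uniq_pendant : uniq (leaves t) = (z \notin leaves s) && uniq (leaves s).
Proof. by case: tP => ->; rewrite /= ?cats1 ?rcons_uniq. Qed.

Lemma subtree_neq_leaf x : x \in leaves s -> x != z.
Proof. by move=> xs; apply: contraNneq zNs => <-. Qed.

Lemma root_dist_pendant x : root_dist t x =
  if x == z then p else if x \in leaves s then d + root_dist s x else 0.
Proof.
by case: tP => -> /=; rewrite inE; have [xz|_] := eqVneq x z;
  rewrite /= ?xz ?(negbTE zNs) ?addr0.
Qed.

Lemma FP_pendant x : FP t x =
  if x == z then p else if x \in leaves s then d / (size (leaves s))%:R + FP s x
  else 0.
Proof.
by case: tP => -> /=; rewrite inE; have [xz|_] := eqVneq x z;
  rewrite /= ?xz ?(negbTE zNs) ?divr1 ?addr0.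
Qed.

Lemma FP_pendant_leaf : FP t z = p.
Proof. by rewrite FP_pendant eqxx. Qed.

Lemma FP_pendant_sub x :
  x \in leaves s -> FP t x = d / (size (leaves s))%:R + FP s x.
Proof. by move=> xs; rewrite FP_pendant xs ifN ?subtree_neq_leaf. Qed.

Lemma pendant_height x :
  ultrametric t -> x \in leaves s -> d + root_dist s x = p.
Proof.
case=> c height xs; have xz := negbTE (subtree_neq_leaf xs).
have := height x; have := height z.
rewrite !leaves_pendant !root_dist_pendant eqxx xz xs orbT => -> // <- //.
Qed.

Lemma ultrametric_pendant : ultrametric t -> ultrametric s.
Proof.
by move=> ut; exists (p - d) => x xs; rewrite -(pendant_height ut xs) addrC addKr.
Qed.

Lemma FP_pendant_sub_le x :
  pos_lengths t -> ultrametric t -> x \in leaves s -> FP t x <= p.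
Proof.
rewrite pos_lengths_pendant => /and3P[_ d0 ps] ut xs.
by rewrite FP_pendant_sub // -(pendant_height ut xs) edge_FP_le_root_dist ?ltW.
Qed.

Lemma FP_pendant_sub_lt x : pos_lengths t -> ultrametric t ->
  (1 < size (leaves s))%N -> x \in leaves s -> FP t x < p.
Proof.
rewrite pos_lengths_pendant => /and3P[_ d0 ps] ut s2 xs.
by rewrite FP_pendant_sub // -(pendant_height ut xs) edge_FP_lt_root_dist.
Qed.

Lemma restrict_pendant Y :
  match restrict Y s with
  | Some (es, s') =>
      if z \in Y then exists2 t', restrict Y t = Some (0, t') &
                                  pendant_node t' z p (d + es) s'
      else restrict Y t = Some (d + es, s')
  | None => restrict Y t = if z \in Y then Some (p + 0, Lf z) else None
  end.
Proof.
case: tP => -> /=; case: (restrict Y s) => [[es s']|]; case: (z \in Y) => //=.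
- by exists (Nd (p + 0) (Lf z) (d + es) s') => //; rewrite addr0; left.
- by exists (Nd (d + es) s' (p + 0) (Lf z)) => //; rewrite addr0; right.
Qed.

End PendantNode.

Definition FP_order_preserved Y t := forall e t' xi xj,
  restrict Y t = Some (e, t') -> xi \in Y -> xj \in Y ->
  xi \in leaves t -> xj \in leaves t ->
  FP t xj <= FP t xi -> FP t' xj <= FP t' xi.

Lemma FP_order_preserved_leaf Y y : FP_order_preserved Y (Lf y).
Proof. by move=> e t' xi xj /=; case: ifP => // _ [_ <-]. Qed.

(* In an ultrametric cherry both leaves have FP equal to the height, before
   and after restriction. *)
Lemma FP_order_preserved_cherry Y a z b w :
  ultrametric (Nd a (Lf z) b (Lf w)) -> FP_order_preserved Y (Nd a (Lf z) b (Lf w)).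
Proof.
move=> [c height] e t' xi xj.
have az : a = c by rewrite -(height z) /= ?inE ?eqxx ?addr0.
have bw : w != z -> b = c.
  by move=> wz; rewrite -(height w) /= !inE ?(negbTE wz) eqxx ?orbT ?addr0.
rewrite [restrict _ _]/=; case: (z \in Y); case: (w \in Y) => // -[_ <-] //= _ _.
rewrite !inE !divr1 !addr0 => /orP[]/eqP-> /orP[]/eqP-> _;
  by rewrite ?eqxx //; case: eqP => // /eqP wz; rewrite az bw.
Qed.

(* The induction step: at an ultrametric pendant node whose subtree has at
   least two leaves, the pendant leaf has the maximal FP value c, which it
   keeps after restriction while all other kept leaves stay at most c. *)
Lemma FP_order_preserved_pendant Y t z p d s :
  pendant_node t z p d s -> z \notin leaves s -> (1 < size (leaves s))%N ->
  pos_lengths t -> ultrametric t ->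
  FP_order_preserved Y s -> FP_order_preserved Y t.
Proof.
move=> tP zNs s2 pt ut s_ord e t' xi xj.
have /and3P[_ _ ps] : [&& 0 < p, 0 < d & pos_lengths s].
  by rewrite -(pos_lengths_pendant tP).
rewrite !(leaves_pendant tP); have := restrict_pendant tP Y.
case Es: (restrict Y s) => [[es s']|]; case zY: (z \in Y); last 3 first.
- move=> -> [_ <-] xiY xjY.
  have yNz y : y \in Y -> (y == z) = false by apply: contraTF => /eqP->; rewrite zY.
  rewrite !yNz //= => xis xjs; rewrite !(FP_pendant_sub tP zNs) // lerD2l.
  exact: s_ord Es _ _ _ _.
- by move=> -> [_ <-].
- by move=> ->.
case=> t'' Et t''P; rewrite Et => -[_ <-] xiY xjY.
have leaves_s' := restrict_leaves Y s; rewrite Es in leaves_s'.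
have zNs' : z \notin leaves s' by rewrite leaves_s' (negbTE zNs) andbF.
have in_s' x : x \in Y -> x \in leaves s -> x \in leaves s'.
  by move=> xY xs; rewrite leaves_s' xY.
have pt'' := proj2 (restrict_pos pt Et); have ut'' := restrict_ultrametric ut Et.
move=> /predU1P[-> | xis] /predU1P[-> | xjs].
- by [].
- by rewrite (FP_pendant_leaf t''P zNs') (FP_pendant_sub_le t''P zNs') ?in_s'.
- rewrite (FP_pendant_leaf tP zNs) => /(lt_le_trans (FP_pendant_sub_lt tP zNs pt ut s2 xis)).
  by rewrite ltxx.
- rewrite !(FP_pendant_sub tP zNs) // !(FP_pendant_sub t''P zNs') ?in_s' //.
  rewrite !lerD2l; exact: s_ord Es _ _ _ _.
Qed.

Lemma FP_order_preserved_caterpillar Y t :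
  (cherries t <= 1)%N -> uniq (leaves t) -> pos_lengths t -> ultrametric t ->
  FP_order_preserved Y t.
Proof.
elim: t => [y|a l IHl b r IHr] ch uq pt ut; first exact: FP_order_preserved_leaf.
have pendant_case z p d s : pendant_node (Nd a l b r) z p d s ->
    (cherries s <= 1)%N -> (1 < size (leaves s))%N ->
    ((cherries s <= 1)%N -> uniq (leaves s) -> pos_lengths s -> ultrametric s ->
      FP_order_preserved Y s) ->
    FP_order_preserved Y (Nd a l b r).
  move=> tP chs s2 IHs; move: (uq); rewrite (uniq_pendant tP) => /andP[zNs us].
  have := pt; rewrite (pos_lengths_pendant tP) => /and3P[_ _ ps].
  have ust := ultrametric_pendant tP zNs ut.
  exact: FP_order_preserved_pendant tP zNs s2 pt ut (IHs chs us ps ust).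
case: l IHl pendant_case ch uq pt ut => [z|a1 l1 b1 r1] IHl;
  case: r IHr => [w|a2 l2 b2 r2] IHr pendant_case ch uq pt ut.
- exact: FP_order_preserved_cherry.
- by apply: pendant_case (or_introl erefl) ch (size_leaves_Nd _ _ _ _) IHr.
- rewrite /= addn0 in ch.
  by apply: pendant_case (or_intror erefl) ch (size_leaves_Nd _ _ _ _) IHl.
- move: ch; rewrite /= leqNgt.
  by rewrite (leq_add (cherries_Nd_gt0 a1 l1 b1 r1) (cherries_Nd_gt0 a2 l2 b2 r2)).
Qed.

End FairProportionCaterpillar.

Theorem proposition1 (R : realFieldType) (X : finType) (T : btree R X)
  (X' : {set X}) (Tt : btree R X) (xi xj : X) :
  phylo_X_tree T -> pos_lengths T -> ultrametric T -> caterpillar T ->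
  (3 <= #|X|)%N ->
  induced (~: X') T = Some Tt ->
  xi \in ~: X' -> xj \in ~: X' ->
  FP T xi >= FP T xj -> FP Tt xi >= FP Tt xj.
Proof.
move=> leavesT posT ultraT caterT _ + xiY xjY.
have uniqT : uniq (leaves T) by rewrite (perm_uniq leavesT) enum_uniq.
have inT x : x \in leaves T by rewrite (perm_mem leavesT) mem_enum.
have chT : (cherries T <= 1)%N by rewrite caterT.
rewrite /induced; case ET: (restrict (~: X') T) => [[e T']|] //= [<-].
exact: FP_order_preserved_caterpillar chT uniqT posT ultraT _ _ _ _ ET xiY xjY
  (inT xi) (inT xj).
Qed.
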